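(* Assume the setting and Assumptions L1, L2 of the context, and define $\delta_1=\min\{\delta_0,(1-e^{-\bar\kappa\sigma})/(2K_1)\}$. Let $U=U^*+F_0$ with $\|F_0\|_{\rm s}<\|F_0\|_{\rm u}\le\delta_1$, and set $F_n=\mathcal R_{n\sigma}(U)-U^*$. Then for every $n\ge0$ such that $\|F_k\|_{\rm u}\le\delta_1$ for all $0\le k\le n$, we have $$\|F_n\|_{\rm s}<\|F_n\|_{\rm u}\quad\text{and}\quad e^{\bar\kappa\sigma/2}\|F_n\|_{\rm u}<\|F_{n+1}\|_{\rm u}<2K_2\|F_n\|_{\rm u}.$$
   Context: $\Gamma$ is a real Banach space, $\sigma>0$, $\mathcal R_\sigma:\Gamma\to\Gamma$ a map with fixed point $U^*$, $\mathcal R_{n\sigma}=(\mathcal R_\sigma)^n$, $\mathcal T_{\sigma,U}$ the Fréchet derivative of $\mathcal R_\sigma$ at $U$. Assumption L1: $\Gamma=E^{\rm u}\oplus E^{\rm s}$, invariant under $\mathcal T_{\sigma,U^*}$, $\dim E^{\rm u}=N$, and for some $\bar\kappa>0$: $\|\mathcal T_{\sigma,U^*}F\|\ge e^{\bar\kappa\sigma}\|F\|$ for $F\in E^{\rm u}$, $\le e^{-\bar\kappa\sigma}\|F\|$ for $F\in E^{\rm s}$. For $F=F^{\rm u}+F^{\rm s}$ ($F^{\rm u}\in E^{\rm u}$, $F^{\rm s}\in E^{\rm s}$), $\|F\|_{\rm s}=\|F^{\rm s}\|$, $\|F\|_{\rm u}=\|F^{\rm u}\|$, and $\|\cdot\|$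 denotes the box norm $\|F\|=\max\{\|F\|_{\rm s},\|F\|_{\rm u}\}$. Assumption L2: there are $\delta_0,K_1,K_2>0$ with $\delta_0K_1\le K_2$ such that for $\|U-U^*\|,\|F\|\le\delta_0$: $\|\mathcal R_\sigma(U+F)-\mathcal R_\sigma(U)-\mathcal T_{\sigma,U}F\|\le K_1\|F\|^2$ and $\|\mathcal T_{\sigma,U}F\|\le K_2\|F\|$. *)

From HB Require Import structures.
From mathcomp Require Import all_boot all_order all_algebra.
From mathcomp Require Import all_classical all_reals all_analysis.
Set Implicit Arguments. Unset Strict Implicit. Unset Printing Implicit Defensive.
Import Order.TTheory GRing.Theory Num.Theory.
Import numFieldNormedType.Exports.
Local Open Scope classical_set_scope.
Local Open Scope ring_scope.

Definition prange (R : realType) (V : normedModType R) (P : V -> V) : set V :=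
  range P.

Definition has_dim (R : realType) (V : normedModType R) (E : set V) (N : nat) : Prop :=
  exists e : 'I_N -> V,
    (forall c : 'I_N -> R, \sum_(i < N) c i *: e i = 0 -> forall i, c i = 0) /\
    E = [set \sum_(i < N) c i *: e i | c in [set: 'I_N -> R]].

From HB Require Import structures.
From mathcomp Require Import all_boot all_order all_algebra.
From mathcomp Require Import all_classical all_reals all_analysis.
From mathcomp Require Import ring lra.
Set Implicit Arguments. Unset Strict Implicit. Unset Printing Implicit Defensive.
Import Order.TTheory GRing.Theory Num.Theory.
Import numFieldNormedType.Exports.
Local Open Scope classical_set_scope.
Local Open Scope ring_scope.

(* Near the fixed point, R_sigma (U* + F) - U* = T F + O(|F|^2), where T stretches
   E^u by at least e^(kappa sigma) and shrinks E^s by e^(-kappa sigma).  On the cone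
   |F^s| < |F^u| the box norm is |F^u|, so once |F^u| <= delta1 the quadratic remainder
   costs at most (1 - e^(-kappa sigma))/2 |F^u|.  This loss keeps the unstable component
   ahead of the stable one, so the cone is invariant, and since
   e^(kappa sigma) - (1 - e^(-kappa sigma))/2 > e^(kappa sigma/2) the unstable component
   still grows by e^(kappa sigma/2) at each step; induction on n. *)

Section ComplementaryProjections.

Variables (R : pzRingType) (V : lmodType R) (P Q : {linear V -> V}).
Hypotheses (PQ_id : forall F, P F + Q F = F)
  (QP0 : forall F, Q (P F) = 0) (PQ0 : forall F, P (Q F) = 0).

Lemma proj_idem F : P (P F) = P F.
Proof. by have := PQ_id (P F); rewrite QP0 addr0. Qed.

Lemma proj_comm (T : V -> V) : {morph T : x y / x + y} ->
    (forall F, range P F -> range P (T F)) ->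
    (forall F, range Q F -> range Q (T F)) ->
  forall F, P (T F) = T (P F).
Proof.
move=> TD invP invQ F.
rewrite -{1}(PQ_id F) TD linearD.
have [y _ <-] := invP (P F) (imageT P F).
have [z _ <-] := invQ (Q F) (imageT Q F).
by rewrite proj_idem PQ0 addr0.
Qed.

End ComplementaryProjections.

Lemma iter_translate (V : zmodType) (f : V -> V) (u x : V) (n : nat) :
  iter n f (u + x) - u = iter n (fun y => f (u + y) - u) x.
Proof.
elim: n => [|n IHn] /=; first by rewrite addrC addKr.
by rewrite -IHn subrKC.
Qed.

Lemma expR_half_sqr (R : realType) (x : R) : expR (x / 2) ^+ 2 = expR x.
Proof. by rewrite -expRM_natr divfK. Qed.

Lemma expansion_margin (R : realFieldType) (a c : R) :
  1 < a -> c * a ^+ 2 = 1 -> 2 * a + (1 - c) < 2 * a ^+ 2.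
Proof.
move=> a_gt1 ca; have c_gt0 : 0 < c by nra.
rewrite -subr_gt0.
(* Multiplied by a^2 = 1/c, the margin is (a - 1)^2 (2a^2 + 2a + 1). *)
have -> : 2 * a ^+ 2 - (2 * a + (1 - c)) =
    c * ((a - 1) ^+ 2 * (2 * a ^+ 2 + 2 * a + 1))
    + (1 - c * a ^+ 2) * (2 * a ^+ 2 - 2 * a - 1) by ring.
by rewrite ca subrr mul0r addr0 mulr_gt0 // mulr_gt0; nra.
Qed.

Section ConeInvariance.

Variables (R : realFieldType) (V : normedModType R) (Pu Ps : {linear V -> V}).
Variables (g T0 : V -> V) (a c K1 K2 delta : R).

Hypothesis box_norm : forall F, `|F| = Num.max `|Ps F| `|Pu F|.
Hypotheses (PuT : forall F, Pu (T0 F) = T0 (Pu F))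
  (PsT : forall F, Ps (T0 F) = T0 (Ps F)).
Hypotheses (a_gt1 : 1 < a) (ca : c * a ^+ 2 = 1) (K1_gt0 : 0 < K1).
Hypotheses (T0_expand : forall F, a ^+ 2 * `|Pu F| <= `|T0 (Pu F)|)
  (T0_contract : forall F, `|T0 (Ps F)| <= c * `|Ps F|).
Hypotheses (T0_bound : forall F, `|F| <= delta -> `|T0 F| <= K2 * `|F|)
  (remainder : forall F, `|F| <= delta -> `|g F - T0 F| <= K1 * `|F| ^+ 2)
  (delta_small : 2 * K1 * delta <= 1 - c).

Lemma norm_Pu_le F : `|Pu F| <= `|F|.
Proof. by rewrite box_norm le_max lexx orbT. Qed.

Lemma norm_Ps_le F : `|Ps F| <= `|F|.
Proof. by rewrite box_norm le_max lexx. Qed.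

Lemma norm_cone F : `|Ps F| <= `|Pu F| -> `|F| = `|Pu F|.
Proof. by move=> sF; rewrite box_norm max_r. Qed.

Lemma cone_step X : `|Ps X| < `|Pu X| -> `|Pu X| <= delta ->
  [/\ `|Ps (g X)| < `|Pu (g X)|, a * `|Pu X| < `|Pu (g X)|
    & `|Pu (g X)| < 2 * K2 * `|Pu X|].
Proof.
move=> s_lt_u u_le.
set u := `|Pu X| in s_lt_u u_le *; set s := `|Ps X| in s_lt_u *.
have u_gt0 : 0 < u := le_lt_trans (normr_ge0 _) s_lt_u.
have normX : `|X| = u := norm_cone (ltW s_lt_u).
have X_le : `|X| <= delta by rewrite normX.
have K1u : 2 * (K1 * u) <= 1 - c.
  by move: delta_small (ler_wpM2l (ltW K1_gt0) u_le); lra.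
have rem_le : 2 * (K1 * u ^+ 2) <= (1 - c) * u.
  by move: (ler_wpM2r (ltW u_gt0) K1u); rewrite expr2 !mulrA.
have /andP[Pu_lo Pu_hi] : `|T0 (Pu X)| - K1 * u ^+ 2 <= `|Pu (g X)|
                         <= `|T0 (Pu X)| + K1 * u ^+ 2.
  rewrite -ler_distl (le_trans (ler_dist_dist _ _)) //.
  by rewrite -PuT -linearB -normX (le_trans (norm_Pu_le _)) ?remainder.
have /andP[_ Ps_hi] : `|T0 (Ps X)| - K1 * u ^+ 2 <= `|Ps (g X)|
                     <= `|T0 (Ps X)| + K1 * u ^+ 2.
  rewrite -ler_distl (le_trans (ler_dist_dist _ _)) //.
  by rewrite -PsT -linearB -normX (le_trans (norm_Ps_le _)) ?remainder.
have expand : a ^+ 2 * u <= `|T0 (Pu X)| := T0_expand X.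
have contract : `|T0 (Ps X)| <= c * s := T0_contract X.
have bound : `|T0 (Pu X)| <= K2 * u by rewrite T0_bound // norm_Pu_le.
have c_gt0 : 0 < c by move: ca a_gt1; nra.
have cs_lt : c * s < c * u by rewrite ltr_pM2l.
have cu_gt0 : 0 < c * u by rewrite mulr_gt0.
have a2u : u < a ^+ 2 * u by rewrite ltr_pMl // exprn_egt1.
have margin_u : 0 < u * (2 * a ^+ 2 - (2 * a + (1 - c))).
  by rewrite mulr_gt0 // subr_gt0 expansion_margin.
clearbody u s; split; lra.
Qed.

Lemma cone_orbit X n : `|Ps X| < `|Pu X| ->
    (forall k, (k <= n)%N -> `|Pu (iter k g X)| <= delta) ->
  [/\ `|Ps (iter n g X)| < `|Pu (iter n g X)|,
      a * `|Pu (iter n g X)| < `|Pu (iter n.+1 g X)|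
    & `|Pu (iter n.+1 g X)| < 2 * K2 * `|Pu (iter n g X)|].
Proof.
move=> X_cone small.
have cone k : (k <= n)%N -> `|Ps (iter k g X)| < `|Pu (iter k g X)|.
  elim: k => [//|k IHk] Sk_le; have k_le := ltnW Sk_le.
  by have [] := cone_step (IHk k_le) (small k k_le).
have [_ grow bounded] := cone_step (cone n (leqnn n)) (small n (leqnn n)).
by split; first exact: cone.
Qed.

End ConeInvariance.

Theorem lemma1 (R : realType) (V : completeNormedModType R)
  (sigma : R) (Rs : V -> V) (Ustar : V) (T : V -> V -> V)
  (N : nat) (Pu Ps : {linear V -> V}) (kappa delta0 K1 K2 : R)
  (U F0 : V) :
  0 < sigma ->
  Rs Ustar = Ustar ->
  (* T U is the Frechet derivative of Rs at U (on the region where L2 is used) *)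
  (forall W : V, `|W - Ustar| <= delta0 ->
     differentiable Rs W /\ ('d Rs W : V -> V) = T W) ->
  (* L1: Gamma = E^u (+) E^s with projections Pu, Ps *)
  (forall F, Pu F + Ps F = F) ->
  (forall F, Pu (Pu F) = Pu F) ->
  (forall F, Ps (Pu F) = 0) ->
  (forall F, Pu (Ps F) = 0) ->
  has_dim (prange Pu) N ->
  (forall F, prange Pu F -> prange Pu (T Ustar F)) ->
  (forall F, prange Ps F -> prange Ps (T Ustar F)) ->
  0 < kappa ->
  (forall F, prange Pu F -> expR (kappa * sigma) * `|F| <= `|T Ustar F|) ->
  (forall F, prange Ps F -> `|T Ustar F| <= expR (- (kappa * sigma)) * `|F|) ->
  (* the norm of Gamma is the box norm *)
  (forall F, `|F| = Num.max `|Ps F| `|Pu F|) ->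
  (* L2 *)
  0 < delta0 -> 0 < K1 -> 0 < K2 -> delta0 * K1 <= K2 ->
  (forall W F, `|W - Ustar| <= delta0 -> `|F| <= delta0 ->
     `|Rs (W + F) - Rs W - T W F| <= K1 * `|F| ^+ 2 /\
     `|T W F| <= K2 * `|F|) ->
  (* the lemma *)
  let delta1 := Num.min delta0 ((1 - expR (- (kappa * sigma))) / (2 * K1)) in
  U = Ustar + F0 ->
  `|Ps F0| < `|Pu F0| -> `|Pu F0| <= delta1 ->
  let Fn := fun n : nat => iter n Rs U - Ustar in
  forall n : nat,
    (forall k : nat, (k <= n)%N -> `|Pu (Fn k)| <= delta1) ->
    `|Ps (Fn n)| < `|Pu (Fn n)| /\
    expR (kappa * sigma / 2) * `|Pu (Fn n)| < `|Pu (Fn n.+1)| /\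
    `|Pu (Fn n.+1)| < 2 * K2 * `|Pu (Fn n)|.
Proof.
move=> sigma_gt0 fixed diffRs sumP _ PsPu PuPs _ invu invs kappa_gt0 expu contrs
  box delta0_gt0 K1_gt0 _ _ L2 delta1 -> cone0 _ Fn n small.
have Ustar_near : `|Ustar - Ustar| <= delta0 by rewrite subrr normr0 ltW.
have TD : {morph T Ustar : x y / x + y}.
  by have [_ <-] := diffRs _ Ustar_near; move=> x y; rewrite linearD.
have PuT := proj_comm sumP PsPu PuPs TD invu invs.
have sumP' F : Ps F + Pu F = F by rewrite addrC.
have PsT := proj_comm sumP' PuPs PsPu TD invs invu.
pose a := expR (kappa * sigma / 2); pose c := expR (- (kappa * sigma)).
have a_gt1 : 1 < a by rewrite expR_gt1 divr_gt0 ?mulr_gt0.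
have ca : c * a ^+ 2 = 1 by rewrite expR_half_sqr mulrC expRxMexpNx_1.
have delta1_le : delta1 <= delta0 by rewrite ge_min lexx.
have delta1_small : 2 * K1 * delta1 <= 1 - c.
  by rewrite mulrC -ler_pdivlMr ?mulr_gt0 // ge_min lexx orbT.
pose g X := Rs (Ustar + X) - Ustar.
have T_expand F : a ^+ 2 * `|Pu F| <= `|T Ustar (Pu F)|.
  by rewrite expR_half_sqr; exact: expu (imageT Pu F).
have T_contract F : `|T Ustar (Ps F)| <= c * `|Ps F| := contrs _ (imageT Ps F).
have L2_Ustar F : `|F| <= delta1 ->
    `|g F - T Ustar F| <= K1 * `|F| ^+ 2 /\ `|T Ustar F| <= K2 * `|F|.
  by move=> F_le; have := L2 _ _ Ustar_near (le_trans F_le delta1_le); rewrite fixed.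
have eFn k : Fn k = iter k g F0 by rewrite /Fn iter_translate.
have small_iter k : (k <= n)%N -> `|Pu (iter k g F0)| <= delta1.
  by rewrite -eFn; exact: small.
have [cone_n grow bounded] := cone_orbit box PuT PsT a_gt1 ca K1_gt0 T_expand
  T_contract (fun F F_le => (L2_Ustar F F_le).2) (fun F F_le => (L2_Ustar F F_le).1)
  delta1_small cone0 small_iter.
by rewrite !eFn.
Qed.
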